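(* If $\mathcal{O}$ is a decomposable set of upwards closed modalities, then for all sets $X,Y$ and relations $R\subseteq X\times Y$: (1) $x\,R\,y$ implies $\eta(x)\,\mathcal{O}(R)\,\eta(y)$; (2) for $t\in TTX$, $r\in TTY$, $t\,\mathcal{O}(\mathcal{O}(R))\,r$ implies $\mu t\,\mathcal{O}(R)\,\mu r$.
   Context: $\Sigma$ is a signature of effect operations with arities $\alpha^n\to\alpha$, $\mathbf{N}\times\alpha^n\to\alpha$, $\alpha^{\mathbf{N}}\to\alpha$ or $\mathbf{N}\times\alpha^{\mathbf{N}}\to\alpha$. $TX$ is the set of possibly infinite labelled trees with leaves $\bot$ or elements of $X$ and internal nodes labelled by operations (or $\sigma_m$, $m\in\mathbb{N}$) with children according to arity; $t\le t'$ iff $t$ is obtained from $t'$ by replacing subtrees with $\bot$. $\eta(x)$ is the leaf $x$; $\mu:TTX\to TX$ replaces each leaf of a tree of trees by that tree. $\mathbf{1}=\{*\}$. A set $\mathcal{O}$ of modalities is given with $[\![o]\!]\subseteq T\mathbf{1}$; upwards closed means $[\![o]\!]$ upward closed under $\le$. $t[\in P]\in T\mathbf{1}$ replaces leaves in $P$ by $*$ and other $X$-leaves by $\bot$; $o(A)=\{t\in TX\mid t[\in A]\in[\![o]\!]\}$. $R[A]=\{y\mid\exists x\in A,\ xRy\}$; $\mathcal{O}$-relator: $t\,\mathcal{O}(R)\,t'$ iff $\forall A\subseteq X\ \forall o\in\mathcal{O}$, $t\in o(A)\Rightarrow t'\in o(R[A])$. $\mathcal{T}$ is the least class of formulas containing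 $o(\top),o(\bot)$ closed under arbitrary $\bigvee,\bigwedge$, with $[\![o(\top)]\!]=o(\{*\})$, $[\![o(\bot)]\!]=o(\emptyset)$, unions/intersections; $t\trianglelefteq t'$ on $T\mathbf{1}$ iff $\forall\Phi\in\mathcal{T}$, $t\in[\![\Phi]\!]\Rightarrow t'\in[\![\Phi]\!]$; $r\preccurlyeq r'$ on $TT\mathbf{1}$ iff $\forall o\,\forall\Phi\in\mathcal{T}$, $r\in o([\![\Phi]\!])\Rightarrow r'\in o([\![\Phi]\!])$. $\mathcal{O}$ is decomposable if $r\preccurlyeq r'$ implies $\mu r\trianglelefteq\mu r'$. *)

From Stdlib Require Import ClassicalEpsilon.
From mathcomp Require Import ssreflect ssrfun ssrbool eqtype ssrnat fintype.

Set Implicit Arguments.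
Unset Strict Implicit.
Unset Printing Implicit Defensive.

Section Trees.

(* Node labels: the operations of the signature Sigma (with their N-parameter,
   if any, folded into the label) together with the sigma_m.
   [ar l = Some n] : l has n children (arity alpha^n);
   [ar l = None]   : l has countably many children (arity alpha^N). *)
Variable L : Type.
Variable ar : L -> option nat.

Definition Ar (l : L) : Type :=
  match ar l with Some n => 'I_n | None => nat end.

CoInductive tree (X : Type) : Type :=
| Bot : tree X
| Leaf : X -> tree X
| Node : forall l : L, (Ar l -> tree X) -> tree X.

Arguments Bot {X}.

CoInductive tle (X : Type) : tree X -> tree X -> Prop :=
| tle_bot t : tle Bot t
| tle_leaf x : tle (Leaf x) (Leaf x)
| tle_node l (k k' : Ar l -> tree X) :
    (forall i, tle (k i) (k' i)) -> tle (Node k) (Node k').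

Definition eta (X : Type) (x : X) : tree X := Leaf x.

CoFixpoint mu (X : Type) (t : tree (tree X)) : tree X :=
  match t with
  | Bot => Bot
  | Leaf s => s
  | Node l k => Node (fun i => mu (k i))
  end.

CoFixpoint restr (X : Type) (P : X -> Prop) (t : tree X) : tree unit :=
  match t with
  | Bot => Bot
  | Leaf x => if excluded_middle_informative (P x) then Leaf tt else Bot
  | Node l k => Node (fun i => restr P (k i))
  end.

Variable M : Type.
Variable sem : M -> tree unit -> Prop.

Definition upwards_closed : Prop :=
  forall (o : M) (t t' : tree unit), tle t t' -> sem o t -> sem o t'.

Definition modal (X : Type) (o : M) (A : X -> Prop) (t : tree X) : Prop :=
  sem o (restr A t).

Definition rimage (X Y : Type) (R : X -> Y -> Prop) (A : X -> Prop) : Y -> Prop :=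
  fun y => exists2 x, A x & R x y.

Definition relator (X Y : Type) (R : X -> Y -> Prop) (t : tree X) (t' : tree Y)
  : Prop :=
  forall (A : X -> Prop) (o : M), modal o A t -> modal o (rimage R A) t'.

Inductive form : Type :=
| FTop : M -> form
| FBot : M -> form
| FOr : forall I : Type, (I -> form) -> form
| FAnd : forall I : Type, (I -> form) -> form.

Fixpoint fsem (phi : form) : tree unit -> Prop :=
  match phi with
  | FTop o => modal o (fun _ : unit => True)
  | FBot o => modal o (fun _ : unit => False)
  | FOr J f => fun t => exists i : J, fsem (f i) t
  | FAnd J f => fun t => forall i : J, fsem (f i) t
  end.

Definition tri_le (t t' : tree unit) : Prop :=
  forall phi : form, fsem phi t -> fsem phi t'.

Definition pre_le (r r' : tree (tree unit)) : Prop :=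
  forall (o : M) (phi : form), modal o (fsem phi) r -> modal o (fsem phi) r'.

Definition decomposable : Prop :=
  forall r r' : tree (tree unit), pre_le r r' -> tri_le (mu r) (mu r').

End Trees.

Arguments Bot {L ar X}.

(* Since the modalities are upwards closed, [[o]] cannot distinguish bisimilar
   trees, and up to bisimilarity restriction commutes with the functorial
   action of T and with mu: (mu t)[in A] ~ mu (t mapped by s |-> s[in A]).
   The unit law is immediate, as x R y gives eta(x)[in A] <= eta(y)[in R[A]].
   For mu, an induction on formulas shows that s O(R) u transfers every formula
   of T true of s[in A] to u[in R[A]]; hence t O(O(R)) r makes the tree of
   restrictions of t ≼-below that of r, and decomposability, applied to the
   formula o(top), transports mu t ∈ o(A) to mu r ∈ o(R[A]). *)
From Stdlib Require Import ClassicalEpsilon.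
From mathcomp Require Import ssreflect ssrbool.

Set Implicit Arguments.
Unset Strict Implicit.
Unset Printing Implicit Defensive.

Section TreeIdentities.

Variables (L : Type) (ar : L -> option nat).

Definition tree_unfold X (t : tree ar X) : tree ar X :=
  match t with Bot => Bot | Leaf x => Leaf ar x | Node l k => Node k end.

Lemma tree_unfoldE X (t : tree ar X) : t = tree_unfold t.
Proof. by case: t. Qed.

CoFixpoint tmap X Y (f : X -> Y) (t : tree ar X) : tree ar Y :=
  match t with
  | Bot => Bot
  | Leaf x => Leaf ar (f x)
  | Node l k => Node (fun i => tmap f (k i))
  end.

Lemma restr_Bot X (P : X -> Prop) : restr P (@Bot _ ar X) = Bot.
Proof. by rewrite [LHS]tree_unfoldE. Qed.

Lemma restr_Leaf X (P : X -> Prop) x :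
  restr P (Leaf ar x) = if excluded_middle_informative (P x) then Leaf ar tt else Bot.
Proof. by rewrite [LHS]tree_unfoldE /=; case: excluded_middle_informative. Qed.

Lemma restr_Node X (P : X -> Prop) l (k : Ar ar l -> tree ar X) :
  restr P (Node k) = Node (fun i => restr P (k i)).
Proof. by rewrite [LHS]tree_unfoldE. Qed.

Lemma tmap_Bot X Y (f : X -> Y) : tmap f (@Bot _ ar X) = Bot.
Proof. by rewrite [LHS]tree_unfoldE. Qed.

Lemma tmap_Leaf X Y (f : X -> Y) x : tmap f (Leaf ar x) = Leaf ar (f x).
Proof. by rewrite [LHS]tree_unfoldE. Qed.

Lemma tmap_Node X Y (f : X -> Y) l (k : Ar ar l -> tree ar X) :
  tmap f (Node k) = Node (fun i => tmap f (k i)).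
Proof. by rewrite [LHS]tree_unfoldE. Qed.

Lemma mu_Bot X : mu (@Bot _ ar (tree ar X)) = Bot.
Proof. by rewrite [LHS]tree_unfoldE. Qed.

Lemma mu_Leaf X (s : tree ar X) : mu (Leaf ar s) = s.
Proof. by rewrite [LHS]tree_unfoldE; case: s. Qed.

Lemma mu_Node X l (k : Ar ar l -> tree ar (tree ar X)) :
  mu (Node k) = Node (fun i => mu (k i)).
Proof. by rewrite [LHS]tree_unfoldE. Qed.

Definition treeE :=
  (restr_Bot, restr_Leaf, restr_Node, tmap_Bot, tmap_Leaf, tmap_Node,
   mu_Bot, mu_Leaf, mu_Node).

CoInductive tbisim X : tree ar X -> tree ar X -> Prop :=
| tbisim_bot : tbisim Bot Bot
| tbisim_leaf x : tbisim (Leaf ar x) (Leaf ar x)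
| tbisim_node l (k k' : Ar ar l -> tree ar X) :
    (forall i, tbisim (k i) (k' i)) -> tbisim (Node k) (Node k').

CoFixpoint tbisim_refl X (t : tree ar X) : tbisim t t.
Proof. case: t => [|x|l k]; constructor => i; exact: tbisim_refl. Qed.

CoFixpoint tbisim_sym X (t t' : tree ar X) : tbisim t t' -> tbisim t' t.
Proof. case=> [|x|l k k' kk']; constructor => i; exact/tbisim_sym/kk'. Qed.

CoFixpoint tbisim_tle X (t t' : tree ar X) : tbisim t t' -> tle t t'.
Proof. case=> [|x|l k k' kk']; constructor => i; exact/tbisim_tle/kk'. Qed.

Lemma restr_Leaf_le X Y (P : X -> Prop) (Q : Y -> Prop) x y :
  (P x -> Q y) -> tle (restr P (Leaf ar x)) (restr Q (Leaf ar y)).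
Proof.
rewrite !treeE => PQ.
case: excluded_middle_informative => [Px|_] /=; last constructor.
by case: excluded_middle_informative => [_|[]] /=; [constructor | apply: PQ].
Qed.

CoFixpoint restr_mono X (P Q : X -> Prop) (t : tree ar X) :
  (forall x, P x -> Q x) -> tle (restr P t) (restr Q t).
Proof.
move=> PQ; case: t => [|x|l k].
- rewrite !treeE; constructor.
- exact/restr_Leaf_le/PQ.
- by rewrite !treeE; constructor => i; apply: restr_mono.
Qed.

CoFixpoint restr_restr X (A : X -> Prop) (P : unit -> Prop) (t : tree ar X) :
  tbisim (restr P (restr A t)) (restr (fun x => A x /\ P tt) t).
Proof.
case: t => [|x|l k]; rewrite !treeE.
- constructor.
- case: excluded_middle_informative => [Ax|nAx] /=; rewrite !treeE.
  + case: excluded_middle_informative => [Ptt|nPtt] /=.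
    * by case: excluded_middle_informative => [_|[]] //=; constructor.
    * by case: excluded_middle_informative => [[_ /nPtt]|_] //=; constructor.
  + by case: excluded_middle_informative => [[/nAx]|_] //=; constructor.
- by constructor => i; apply: restr_restr.
Qed.

CoFixpoint restr_unit_full (P : unit -> Prop) (t : tree ar unit) :
  (forall u, P u) -> tbisim (restr P t) t.
Proof.
move=> Pfull; case: t => [|[]|l k]; rewrite !treeE.
- constructor.
- case: excluded_middle_informative => //= _; constructor.
- by constructor => i; apply: restr_unit_full.
Qed.

CoFixpoint restr_tmap X Y (f : X -> Y) (P : Y -> Prop) (t : tree ar X) :
  tbisim (restr P (tmap f t)) (restr (fun x => P (f x)) t).
Proof.
case: t => [|x|l k]; rewrite !treeE.
- constructor.
- exact: tbisim_refl.
- by constructor => i; apply: restr_tmap.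
Qed.

CoFixpoint restr_mu X (A : X -> Prop) (t : tree ar (tree ar X)) :
  tbisim (restr A (mu t)) (mu (tmap (restr A) t)).
Proof.
case: t => [|s|l k]; rewrite !treeE.
- constructor.
- exact: tbisim_refl.
- by constructor => i; apply: restr_mu.
Qed.

End TreeIdentities.

Section Modalities.

Variables (L : Type) (ar : L -> option nat) (M : Type).
Variable sem : M -> tree ar unit -> Prop.
Hypothesis sem_up : upwards_closed sem.

Lemma sem_tbisim o (t t' : tree ar unit) : tbisim t t' -> sem o t <-> sem o t'.
Proof. by move=> tt'; split; apply/sem_up/tbisim_tle; last apply: tbisim_sym. Qed.

Lemma modal_mono X o (P Q : X -> Prop) (t : tree ar X) :
  (forall x, P x -> Q x) -> modal sem o P t -> modal sem o Q t.
Proof. by move=> /(restr_mono t); apply: sem_up. Qed.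

Lemma modal_restr X o (A : X -> Prop) (P : unit -> Prop) (t : tree ar X) :
  modal sem o P (restr A t) <-> modal sem o (fun x => A x /\ P tt) t.
Proof. exact/sem_tbisim/restr_restr. Qed.

Lemma modal_tmap X Y o (f : X -> Y) (P : Y -> Prop) (t : tree ar X) :
  modal sem o P (tmap f t) <-> modal sem o (fun x => P (f x)) t.
Proof. exact/sem_tbisim/restr_tmap. Qed.

Lemma modal_mu X o (A : X -> Prop) (t : tree ar (tree ar X)) :
  modal sem o A (mu t) <-> sem o (mu (tmap (restr A) t)).
Proof. exact/sem_tbisim/restr_mu. Qed.

Lemma modal_True_unit o (t : tree ar unit) :
  modal sem o (fun _ => True) t <-> sem o t.
Proof. exact/sem_tbisim/restr_unit_full. Qed.

Variables (X Y : Type) (R : X -> Y -> Prop).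

Lemma relator_eta x y : R x y -> relator sem R (eta ar x) (eta ar y).
Proof.
move=> Rxy A o; apply: sem_up.
by apply: restr_Leaf_le => Ax; exists x.
Qed.

Lemma relator_modal_restr o (A : X -> Prop) (P : unit -> Prop) s u :
  relator sem R s u -> modal sem o P (restr A s) -> modal sem o P (restr (rimage R A) u).
Proof.
move=> Rsu /modal_restr /Rsu RA; apply/modal_restr; apply: modal_mono RA.
by move=> y [x [Ax Ptt] Rxy]; split; first exists x.
Qed.

Lemma relator_fsem_restr (phi : form M) (A : X -> Prop) s u :
  relator sem R s u -> fsem sem phi (restr A s) -> fsem sem phi (restr (rimage R A) u).
Proof.
move=> Rsu; elim: phi => [o|o|I f IH|I f IH] /=.
- exact: relator_modal_restr.
- exact: relator_modal_restr.
- by case=> i /IH; exists i.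
- by move=> Hf i; apply: IH.
Qed.

Lemma relator_pre_le (A : X -> Prop) t r :
  relator sem (relator sem R) t r ->
  pre_le sem (tmap (restr A) t) (tmap (restr (rimage R A)) r).
Proof.
move=> Rtr o phi /modal_tmap /Rtr RA; apply/modal_tmap; apply: modal_mono RA.
by move=> u [s phi_s Rsu]; apply: relator_fsem_restr Rsu phi_s.
Qed.

Lemma relator_mu : decomposable sem -> forall t r,
  relator sem (relator sem R) t r -> relator sem R (mu t) (mu r).
Proof.
move=> dec t r Rtr A o /modal_mu At.
apply/modal_mu/modal_True_unit.
by apply: (dec _ _ (relator_pre_le (A := A) Rtr) (FTop o)); apply/modal_True_unit.
Qed.

End Modalities.

Theorem lemma5p8 (L : Type) (ar : L -> option nat)
  (M : Type) (sem : M -> tree ar unit -> Prop)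
  (Hup : upwards_closed sem) (Hdec : decomposable sem)
  (X Y : Type) (R : X -> Y -> Prop) :
  (forall (x : X) (y : Y), R x y -> relator sem R (eta ar x) (eta ar y)) /\
  (forall (t : tree ar (tree ar X)) (r : tree ar (tree ar Y)),
      relator sem (relator sem R) t r -> relator sem R (mu t) (mu r)).
Proof. by split; [apply: relator_eta | apply: relator_mu]. Qed.
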